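(* Let $G$ be a finite group generated by a set $S$ with $1_G\in S$, let $\gamma$ be an irreducible monomial representation of $G$, and let $A\subset G$ be a normal symmetric set such that $2\operatorname{SpecRad}(\widehat{1_A}(\gamma))>\mathbb{P}_G(S\cdot A)$. Then $\gamma$ is one-dimensional.
   Context: A representation is a homomorphism $\gamma:G\to U_n(\mathbb{C})$; it is monomial if it is induced by a one-dimensional representation of some subgroup $H\le G$ (i.e. its character is the induced character $\lambda^G$ of some homomorphism $\lambda:H\to S^1$). $A$ symmetric means $A=A^{-1}$, normal means $xA=Ax$ for all $x\in G$. $\mathbb{P}_G(E)=|E|/|G|$ and $\mathbb{E}_{x\in G}$ is the average over $G$. The Fourier transform is $\widehat{f}(\gamma):=\mathbb{E}_{x\in G}f(x)\gamma(x)$, and $\operatorname{SpecRad}(M)$ is the largest absolute value of an eigenvalue of the matrix $M$. $S\cdot A=\{sa:s\in S,a\in A\}$. *)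

From HB Require Import structures.
From mathcomp Require Import all_boot all_order all_algebra all_fingroup all_solvable all_field all_character.
Set Implicit Arguments. Unset Strict Implicit. Unset Printing Implicit Defensive.
Import Order.TTheory GRing.Theory Num.Theory.
Local Open Scope ring_scope.

(* Multiset of eigenvalues of a square complex matrix: the roots (with
   multiplicity) of its characteristic polynomial, which splits over algC. *)
Definition eigen_seq (n : nat) (M : 'M[algC]_n) : seq algC :=
  sval (closed_field_poly_normal (char_poly M)).

(* Spectral radius: largest absolute value of an eigenvalue (0 for n = 0). *)
Definition SpecRad (n : nat) (M : 'M[algC]_n) : algC :=
  \big[Num.max/0]_(z <- eigen_seq M) `|z|.

Definition fourier (gT : finGroupType) (G : {group gT}) (n : nat)
  (rG : mx_representation algC G n) (f : gT -> algC) : 'M[algC]_n :=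
  (#|G|%:R)^-1 *: \sum_(x in G) f x *: rG x.

Definition indic (gT : finGroupType) (A : {set gT}) : gT -> algC :=
  fun x => if x \in A then 1 else 0.

Definition unitary_rep (gT : finGroupType) (G : {group gT}) (n : nat)
  (rG : mx_representation algC G n) : Prop :=
  forall x, x \in G -> rG x *m (map_mx (fun z : algC => z^*) (rG x))^T = 1%:M.

Definition monomial_rep (gT : finGroupType) (G : {group gT}) (n : nat)
  (rG : mx_representation algC G n) : Prop :=
  exists H : {group gT}, exists2 lam : 'CF(H),
    H \subset G /\ lam \is a linear_char & cfRepr rG = 'Ind[G] lam.

Definition probG (gT : finGroupType) (G : {group gT}) (E : {set gT}) : algC :=
  #|E|%:R / #|G|%:R.

From HB Require Import structures.
From mathcomp Require Import all_boot all_order all_algebra all_fingroup all_solvable all_field all_character.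
Import Order.TTheory GRing.Theory Num.Theory.
Set Implicit Arguments.
Unset Strict Implicit.
Unset Printing Implicit Defensive.

Local Open Scope ring_scope.

(* Write gamma = Ind_H^G lam with lam linear, so n = |G : H|.  Since A is
   normal, the class sum F = sum_(a in A) gamma(a) commutes with gamma(G), hence
   is the scalar chi(A)/chi(1) by Schur's lemma; inducing and using normality
   again, chi(A) = |G : H| lam(A :&: H), so F = lam(A :&: H) and the spectral
   radius of the Fourier coefficient is at most |A :&: H| / |G|.  If H were
   proper, some s in S would lie outside H, and A :&: H and s (A :&: H) would
   be disjoint subsets of S A, giving |S A| >= 2 |A :&: H|, against the
   hypothesis.  So S, hence G, lies in H and n = 1. *)

Section NormalSets.
Variable gT : finGroupType.
Implicit Types (G H : {group gT}) (A B S : {set gT}).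

Lemma lcoset_rcoset_norms G A :
  (forall x, x \in G -> (x *: A)%g = (A :* x)%g) -> G \subset 'N(A)%g.
Proof. by move=> nA; apply/normsP=> x Gx; rewrite conjsgE -nA // lcosetK. Qed.

Lemma big_conjg_norm (V : nmodType) (f : gT -> V) A y :
  y \in 'N(A)%g -> \sum_(a in A) f (a ^ y)%g = \sum_(a in A) f a.
Proof.
move=> nAy; rewrite [RHS](reindex_inj (@conjg_inj _ y)) /=.
by apply: eq_bigl => a; rewrite memJ_norm.
Qed.

Lemma disjoint_lcoset_notin H B s :
  B \subset H -> s \notin H -> [disjoint B & (s *: B)%g].
Proof.
move=> sBH nHs; apply/pred0P=> x /=; apply/negbTE/andP.
case=> /(subsetP sBH) Hx /lcosetP[b /(subsetP sBH) Hb def_x].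
by move: nHs; rewrite -(mulgK b s) -def_x groupM ?groupV.
Qed.

Lemma card_mulg_ge_double H S A s :
  1%g \in S -> s \in S -> s \notin H -> (2 * #|A :&: H| <= #|(S * A)%g|)%N.
Proof.
move=> S1 Ss nHs; set B := A :&: H.
have sBA : B \subset A := subsetIl A H.
have sBSA : B :|: (s *: B)%g \subset (S * A)%g.
  rewrite subUset; apply/andP; split; apply/subsetP=> x.
    by move/(subsetP sBA)=> Ax; rewrite -[x]mul1g mem_mulg.
  by case/lcosetP=> b /(subsetP sBA) Ab ->; rewrite mem_mulg.
apply: leq_trans (subset_leq_card sBSA).
have [_] := leq_card_setU B (s *: B)%g.
rewrite (@disjoint_lcoset_notin H) ?subsetIr // => /eqP->.
by rewrite card_lcoset mul2n addnn.
Qed.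

End NormalSets.

Lemma SpecRad_scalar_le n (d : algC) : SpecRad (d%:M : 'M_n) <= `|d|.
Proof.
rewrite /SpecRad /eigen_seq; case: closed_field_poly_normal => r /= def_chi.
rewrite big_seq; apply: (big_rec (fun m => m <= `|d|)) => // z m rz le_m_d.
have : root (char_poly (d%:M : 'M_n)) z.
  by rewrite def_chi (monicP (char_poly_monic _)) scale1r root_prod_XsubC.
rewrite -eigenvalue_root_char => /eigenvalueP[v].
rewrite mul_mx_scalar => /eqP; rewrite -subr_eq0 -scalerBl scaler_eq0 subr_eq0.
case/predU1P=> [<- _ | /eqP->]; last by rewrite eqxx.
by rewrite /Num.max; case: ifP.
Qed.

Section MatrixRepresentation.
Variables (gT : finGroupType) (G : {group gT}) (n : nat).
Variable rG : mx_representation algC G n.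
Variable A : {set gT}.
Hypotheses (sAG : A \subset G) (nAG : G \subset 'N(A)%g).

Lemma fourier_indicE :
  fourier rG (indic A) = #|G|%:R^-1 *: \sum_(a in A) rG a.
Proof.
rewrite /fourier (big_setID A) /= (setIidPr sAG) [X in _ + X]big1 ?addr0.
  by congr (_ *: _); apply: eq_bigr => a Aa; rewrite /indic Aa scale1r.
by move=> x /setDP[_ /negbTE nAx]; rewrite /indic nAx scale0r.
Qed.

Lemma centgmx_sum_norm : centgmx rG (\sum_(a in A) rG a).
Proof.
apply/centgmxP=> x Gx; rewrite mulmx_suml mulmx_sumr.
rewrite -(@big_conjg_norm _ _ (fun a => rG a *m rG x) A x^-1%g)
  ?(subsetP nAG) ?groupV //.
apply: eq_bigr => a /(subsetP sAG) Ga.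
by rewrite -!repr_mxM ?groupJ ?groupV // /conjg invgK !mulgA mulgKV.
Qed.

Lemma mx_irr_sum_norm_scalar : mx_irreducible rG ->
  \sum_(a in A) rG a = ((\sum_(a in A) cfRepr rG a) / n%:R)%:M.
Proof.
move=> irrG; have [n_gt0 _] := (mx_irrP rG).1 irrG.
have [c def_F] : exists c : algC, \sum_(a in A) rG a = c%:M.
  have absG := @group_closure_closed_field _ _ _ _ _ irrG.
  have /is_scalar_mxP[c ->] := mx_abs_irr_cent_scalar absG centgmx_sum_norm.
  by exists c.
have chiA : \sum_(a in A) cfRepr rG a = c *+ n.
  rewrite -(mxtrace_scalar n c) -def_F raddf_sum.
  by apply: eq_bigr => a /(subsetP sAG) Ga; rewrite cfunE Ga mulr1n.
by rewrite def_F chiA -[c *+ n]mulr_natr mulfK // pnatr_eq0 -lt0n.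
Qed.

End MatrixRepresentation.

Section InducedLinearCharacter.
Variables (gT : finGroupType) (G H : {group gT}) (lam : 'CF(H)).
Hypotheses (sHG : H \subset G) (lin_lam : lam \is a linear_char).

Lemma norm_sum_lin_char_le (A : {set gT}) :
  `|\sum_(a in A) lam a| <= #|A :&: H|%:R.
Proof.
apply: le_trans (ler_norm_sum _ _ _) _.
rewrite (big_setID H) /= [X in _ + X]big1 ?addr0; last first.
  by move=> a /setDP[_ nHa]; rewrite cfun0 ?normr0.
rewrite -sum1_card natr_sum; apply: ler_sum => a /setIP[_ Ha].
by rewrite normC_lin_char.
Qed.

Lemma cfInd_sum_norm (phi : 'CF(H)) (A : {set gT}) : G \subset 'N(A)%g ->
  \sum_(a in A) 'Ind[G] phi a = #|G : H|%g%:R * \sum_(a in A) phi a.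
Proof.
move=> nAG; under eq_bigr do rewrite cfIndE //.
rewrite -mulr_sumr exchange_big /=.
under eq_bigr => y Gy do rewrite big_conjg_norm ?(subsetP nAG) //.
rewrite sumr_const -(Lagrange sHG) -[X in _ * X]mulr_natl natrM -mulrA mulKf //.
by rewrite pnatr_eq0 -lt0n cardG_gt0.
Qed.

Lemma cfRepr_Ind_lin_char_degree n (rG : mx_representation algC G n) :
  cfRepr rG = 'Ind[G] lam -> n = #|G : H|%g.
Proof.
move=> chiE; apply/eqP; rewrite -eqC_nat -(cfRepr1 rG) chiE.
by rewrite cfInd1 // lin_char1 // mulr1.
Qed.

Lemma SpecRad_fourier_indic_le n (rG : mx_representation algC G n)
    (A : {set gT}) :
  mx_irreducible rG -> cfRepr rG = 'Ind[G] lam ->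
  A \subset G -> G \subset 'N(A)%g ->
  SpecRad (fourier rG (indic A)) <= #|A :&: H|%:R / #|G|%:R.
Proof.
move=> irrG chiE sAG nAG.
rewrite fourier_indicE // mx_irr_sum_norm_scalar // chiE cfInd_sum_norm //.
rewrite -(cfRepr_Ind_lin_char_degree chiE) mulrC mulKf; last first.
  by rewrite pnatr_eq0 -lt0n; case/mx_irrP: irrG.
rewrite scale_scalar_mx; apply: le_trans (SpecRad_scalar_le _ _) _.
rewrite normrM normfV normr_nat mulrC ler_pM2r ?invr_gt0 ?ltr0n ?cardG_gt0 //.
exact: norm_sum_lin_char_le.
Qed.

End InducedLinearCharacter.

Theorem lemma6p2 (gT : finGroupType) (G : {group gT}) (S A : {set gT})
  (n : nat) (rG : mx_representation algC G n) :
  S \subset G -> <<S>>%g = G -> (1%g \in S) ->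
  unitary_rep rG -> mx_irreducible rG -> monomial_rep rG ->
  A \subset G -> (A^-1)%g = A -> (forall x, x \in G -> (x *: A)%g = (A :* x)%g) ->
  probG G (S * A)%g < 2 * SpecRad (fourier rG (indic A)) ->
  n = 1%N.
Proof.
move=> _ genS S1 _ irrG [H [lam [sHG lin_lam] chiE]] sAG _ nA ltPSA.
have nAG := lcoset_rcoset_norms nA.
rewrite (cfRepr_Ind_lin_char_degree sHG lin_lam chiE).
have [sSH | /subsetPn[s Ss nHs]] := boolP (S \subset H).
  by apply/eqP; rewrite indexg_eq1 -genS gen_subG.
suff : 2 * SpecRad (fourier rG (indic A)) <= probG G (S * A)%g.
  by move/(lt_le_trans ltPSA); rewrite ltxx.
apply: le_trans (_ : 2 * (#|A :&: H|%:R / #|G|%:R) <= _).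
  by rewrite ler_pM2l ?ltr0n // (SpecRad_fourier_indic_le sHG lin_lam).
rewrite /probG mulrA -natrM ler_pM2r ?invr_gt0 ?ltr0n ?cardG_gt0 // ler_nat.
exact: card_mulg_ge_double S1 Ss nHs.
Qed.
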